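(* For any $\sigma\in S_n$ and $I,J\in\mathcal I_\lambda$, $\widetilde W_{\sigma,I}(z_J,z,h)=0$ unless $J\le_\sigma I$.
   Context: Fix $N,n$, $\lambda\in\mathbb Z_{\ge0}^N$ with $\sum\lambda_k=n$; $\lambda^{(k)}=\lambda_1+\dots+\lambda_k$, $\lambda^{\{1\}}=\lambda^{(1)}+\dots+\lambda^{(N-1)}$. $\mathcal I_\lambda$ = ordered partitions $I=(I_1,\dots,I_N)$ of $\{1,\dots,n\}$ with $|I_k|=\lambda_k$; write $I_1\cup\dots\cup I_k=\{i^{(k)}_1<\dots<i^{(k)}_{\lambda^{(k)}}\}$; $\sigma(I)=(\sigma(I_1),\dots,\sigma(I_N))$. Weight functions: variables $t^{(k)}_a$ ($1\le k\le N-1$, $1\le a\le\lambda^{(k)}$), $z_1,\dots,z_n$, $h$; $t^{(N)}_a=z_a$. $U_I=\prod_{k=1}^{N-1}\prod_{a=1}^{\lambda^{(k)}}\Big(\prod_{c:\,i^{(k+1)}_c<i^{(k)}_a}(1-ht^{(k+1)}_c/t^{(k)}_a)\prod_{c:\,i^{(k+1)}_c>i^{(k)}_a}(1-t^{(k+1)}_c/t^{(k)}_a)\prod_{b=a+1}^{\lambda^{(k)}}\frac{1-ht^{(k)}_b/t^{(k)}_a}{1-t^{(k)}_b/t^{(k)}_a}\Big)$ ($c$ ranges in $1..\lambda^{(k+1)}$), $W_I=(1-h)^{\lambda^{\{1\}}}\mathrm{Sym}_{t^{(1)}}\cdots\mathrm{Sym}_{t^{(N-1)}}U_I$ with $\mathrm{Sym}_{t^{(k)}}$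 the sum over all permutations of $t^{(k)}_1,\dots,t^{(k)}_{\lambda^{(k)}}$. $W_{\sigma,I}(t,z,h)=W_{\sigma^{-1}(I)}(t,z_{\sigma(1)},\dots,z_{\sigma(n)},h)$. $E(t,h)=\prod_{k=1}^{N-1}\prod_{a,b=1}^{\lambda^{(k)}}(1-ht^{(k)}_b/t^{(k)}_a)$, $\widetilde W_{\sigma,I}=W_{\sigma,I}/E$. $f(z_J,z,h)$: substitution $t^{(k)}_a=z_{j^{(k)}_a}$, $J_1\cup\dots\cup J_k=\{j^{(k)}_1<\dots\}$ (for $\widetilde W$, this is the Laurent polynomial $W_{\sigma,I}(z_J,z,h)/E(z_J,h)$). Order $\le_\sigma$: with $\sigma^{-1}(I_1\cup\dots\cup I_k)=\{a^k_1<\dots\}$, $\sigma^{-1}(J_1\cup\dots\cup J_k)=\{b^k_1<\dots\}$, $J\le_\sigma I$ iff $b^k_i\le a^k_i$ for all $k=1,\dots,N-1$ and all $i$. *)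

From HB Require Import structures.
From mathcomp Require Import all_boot all_order all_algebra all_fingroup.
Set Implicit Arguments. Unset Strict Implicit. Unset Printing Implicit Defensive.
Import GRing.Theory.
Local Open Scope ring_scope.

(* Conventions: blocks are 0-based ('I_N), so block k (0-based) is I_{k+1}.
   An ordered partition I = (I_1,...,I_N) of {1..n} is encoded (0-based
   elements) as its block map I : 'I_n -> 'I_N  (i \in I_{k+1} iff I i = k). *)

Definition is_opart (n N : nat) (lam : 'I_N -> nat) (I : 'I_n -> 'I_N) : Prop :=
  forall k : 'I_N, #|[pred i | I i == k]| = lam k.

Definition lamc (N : nat) (lam : 'I_N -> nat) (k : nat) : nat :=
  (\sum_(i < N | (i < k)%N) lam i)%N.

Definition lam1 (N : nat) (lam : 'I_N -> nat) : nat :=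
  (\sum_(1 <= k < N) lamc lam k)%N.

(* sorted list of I_1 \cup ... \cup I_k (0-based elements); its a-th entry
   (0-based a) is i^{(k)}_{a+1} - 1 *)
Definition idx (n N : nat) (I : 'I_n -> 'I_N) (k : nat) : seq nat :=
  map val (filter (fun i => (I i < k)%N) (enum 'I_n)).

Definition ix (n N : nat) (I : 'I_n -> 'I_N) (k a : nat) : nat :=
  nth 0%N (idx I k) a.

Definition permfun (m : nat) (s : 'S_m) (a : nat) : nat :=
  odflt a (omap (fun i : 'I_m => val (s i)) (insub a)).

Section WeightFunctions.
Variable F : fieldType.

(* variables: t k a = t^{(k)}_{a+1}; the level N is t^{(N)}_{a+1} = z_{a+1} *)

Fixpoint symrec (K : nat) (sz : nat -> nat) (f : (nat -> nat -> F) -> F)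
    (t : nat -> nat -> F) : F :=
  match K with
  | 0 => f t
  | K'.+1 => \sum_(s : 'S_(sz K'.+1))
       symrec K' sz f (fun k a => if k == K'.+1 then t k (permfun s a) else t k a)
  end.

Definition Ufun (n N : nat) (lam : 'I_N -> nat) (I : 'I_n -> 'I_N)
    (t : nat -> nat -> F) (h : F) : F :=
  \prod_(1 <= k < N) \prod_(a < lamc lam k)
    ((\prod_(c < lamc lam k.+1 | (ix I k.+1 c < ix I k a)%N)
        (1 - h * t k.+1 c / t k a))
   * (\prod_(c < lamc lam k.+1 | (ix I k a < ix I k.+1 c)%N)
        (1 - t k.+1 c / t k a))
   * (\prod_(a.+1 <= b < lamc lam k)
        ((1 - h * t k b / t k a) / (1 - t k b / t k a)))).

(* W_I(t,z,h), with z stored at level N of t *)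
Definition Wfun (n N : nat) (lam : 'I_N -> nat) (I : 'I_n -> 'I_N)
    (t : nat -> nat -> F) (h : F) : F :=
  (1 - h) ^+ lam1 lam * symrec N.-1 (lamc lam) (fun t' => Ufun lam I t' h) t.

Definition Efun (N : nat) (lam : 'I_N -> nat) (t : nat -> nat -> F) (h : F) : F :=
  \prod_(1 <= k < N) \prod_(a < lamc lam k) \prod_(b < lamc lam k)
    (1 - h * t k b / t k a).

(* value of z at a 0-based nat index (0 out of range; never used out of range) *)
Definition zat (n : nat) (z : 'I_n -> F) (i : nat) : F :=
  odflt 0 (omap z (insub i)).

(* the point (t,z) = (z_J, z_{sigma(1)},...,z_{sigma(n)}):
   t^{(k)}_a = z_{j^{(k)}_a} for k < N, level N holds z o sigma *)
Definition tJsig (n N : nat) (J : 'I_n -> 'I_N) (sigma : 'S_n) (z : 'I_n -> F)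
    (k a : nat) : F :=
  if (k < N)%N then zat z (ix J k a) else zat (fun i => z (sigma i)) a.

(* W~_{sigma,I}(z_J,z,h) = W_{sigma^{-1}(I)}(z_J, z o sigma, h) / E(z_J,h);
   the block map of sigma^{-1}(I) is I o sigma *)
Definition Wtilde_at (n N : nat) (lam : 'I_N -> nat) (sigma : 'S_n)
    (I J : 'I_n -> 'I_N) (z : 'I_n -> F) (h : F) : F :=
  Wfun lam (fun i => I (sigma i)) (tJsig J sigma z) h
  / Efun lam (tJsig J sigma z) h.

End WeightFunctions.

Definition le_sigma (n N : nat) (lam : 'I_N -> nat) (sigma : 'S_n)
    (J I : 'I_n -> 'I_N) : Prop :=
  forall k : nat, (1 <= k < N)%N -> forall i : nat, (i < lamc lam k)%N ->
    (ix (fun x => J (sigma x)) k i <= ix (fun x => I (sigma x)) k i)%N.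

From HB Require Import structures.
From mathcomp Require Import all_boot all_order all_algebra all_fingroup.
From mathcomp Require Import zify.
Import GRing.Theory.

Set Implicit Arguments. Unset Strict Implicit. Unset Printing Implicit Defensive.

(* Expanding the symmetrizations, W~_{sigma,I}(z_J,z,h) is a sum of products
   U_{sigma^-1(I)} at points whose level-k variables are the z_{j^(k)_a} in
   some order, and whose level N is z o sigma.  In a nonvanishing term every
   variable t^(k)_a = z_x of level k < N occurs again at level k+1, as
   t^(k+1)_c say, and the factor 1 - t^(k+1)_c / t^(k)_a forces
   i^(k+1)_c <= i^(k)_a (indices of sigma^-1(I)).  Following z_x up to level
   N, where t^(N)_c = z_(sigma c) and i^(N)_c = c, gives
   sigma^-1(x) <= i^(k)_a.  The first i+1 variables of level k thus yield
   i+1 distinct elements of sigma^-1(J_1 u ... u J_k), all at most i^(k)_i,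
   so the i-th smallest element b^k_i of that set is at most a^k_i. *)

Section PermFun.
Variable m : nat.
Implicit Type s : 'S_m.

Lemma permfun_ord s (i : 'I_m) : permfun s i = s i.
Proof. by rewrite /permfun insubT //= => im; congr (val (s _)); apply: val_inj. Qed.

Lemma permfun_lt s a : a < m -> permfun s a < m.
Proof. by move=> am; rewrite -[a]/(val (Ordinal am)) permfun_ord. Qed.

Lemma permfun_inj s : {in gtn m &, injective (permfun s)}.
Proof.
move=> a b am bm; rewrite -[a]/(val (Ordinal am)) -[b]/(val (Ordinal bm)).
by rewrite !permfun_ord => /val_inj /perm_inj ->.
Qed.

Lemma permfunK s : {in gtn m, cancel (permfun s) (permfun s^-1)}.
Proof. by move=> a am; rewrite -[a]/(val (Ordinal am)) !permfun_ord permK. Qed.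

Lemma permfunVK s : {in gtn m, cancel (permfun s^-1) (permfun s)}.
Proof. by move=> a am; rewrite -{1}(invgK s) permfunK. Qed.

Lemma permfun_surj s b : b < m -> exists2 a, a < m & permfun s a = b.
Proof. by move=> bm; exists (permfun s^-1 b); rewrite ?permfun_lt ?permfunVK. Qed.

End PermFun.

Lemma zat_ord (F : fieldType) m (f : 'I_m -> F) (i : 'I_m) : zat f i = f i.
Proof. by rewrite /zat insubT //= => im; congr f; apply: val_inj. Qed.

Lemma zat_perm (F : fieldType) m (f : 'I_m -> F) (s : 'S_m) a : a < m ->
  zat (fun i => f (s i)) a = zat f (permfun s a).
Proof. by move=> am; rewrite -[a]/(val (Ordinal am)) permfun_ord !zat_ord. Qed.

Section Idx.
Variables (n N : nat) (I : 'I_n -> 'I_N).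

Lemma idx_sorted k : sorted ltn (idx I k).
Proof.
apply: (subseq_sorted ltn_trans _ (iota_ltn_sorted 0 n)).
by rewrite -val_enum_ord; apply/map_subseq/filter_subseq.
Qed.

Lemma idx_uniq k : uniq (idx I k).
Proof. exact: (sorted_uniq ltn_trans ltnn (idx_sorted k)). Qed.

Lemma idx_sorted_leq k : sorted leq (idx I k).
Proof. by apply: sub_sorted (idx_sorted k) => x y /ltnW. Qed.

Lemma idx_memP k x : x \in idx I k -> exists2 i : 'I_n, x = i & I i < k.
Proof. by case/mapP=> i; rewrite mem_filter => /andP[Ik _] ->; exists i. Qed.

Lemma idx_mem k (i : 'I_n) : I i < k -> val i \in idx I k.
Proof. by move=> Ik; rewrite map_f // mem_filter Ik mem_enum. Qed.

Lemma idx_N : idx I N = iota 0 n.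
Proof.
rewrite /idx -val_enum_ord; congr map.
by rewrite (eq_filter (a2 := predT)) ?filter_predT // => i; rewrite /= ltn_ord.
Qed.

Lemma size_idx (lam : 'I_N -> nat) k :
  is_opart lam I -> size (idx I k) = lamc lam k.
Proof.
move=> HI; rewrite size_map size_filter -sum1_count enumT.
rewrite (partition_big I (fun j : 'I_N => j < k)) //=.
apply: eq_bigr => j jk; rewrite -HI -sum1_card; apply: eq_bigl => i.
by rewrite inE; case: eqP => [->|]; rewrite ?jk ?andbF.
Qed.

Lemma is_opart_perm (lam : 'I_N -> nat) (s : 'S_n) :
  is_opart lam I -> is_opart lam (fun i => I (s i)).
Proof.
move=> HI k; rewrite -HI -!sum1_card (reindex_inj (@perm_inj _ s^-1)%g) /=.
by apply: eq_bigl => i; rewrite !inE permKV.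
Qed.

End Idx.

Lemma lamc_N N (lam : 'I_N -> nat) : lamc lam N = (\sum_(k < N) lam k)%N.
Proof. by apply: eq_bigl => i; rewrite ltn_ord. Qed.

Lemma nth_le_of_uniq_bounded (s T : seq nat) i M :
  sorted leq s -> uniq T -> i < size T -> {subset T <= s} ->
  {in T, forall y, y <= M} -> nth 0 s i <= M.
Proof.
move=> ss uT iT sub bnd; apply: (Order.POrderTheory.nth_count_le 0 ss).
rewrite -size_filter; apply: leq_trans iT (uniq_leq_size uT _) => y yT.
by rewrite mem_filter sub // andbT; apply: bnd.
Qed.

Lemma prodf_eq0_mem (R : idomainType) (I : eqType) (r : seq I) (P : pred I)
    (F : I -> R) x :
  x \in r -> P x -> F x = 0%R -> (\prod_(i <- r | P i) F i = 0)%R.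
Proof.
move=> xr Px Fx; apply/eqP; rewrite prodf_seq_eq0; apply/hasP.
by exists x; rewrite // Px Fx eqxx.
Qed.

(* The points visited by [symrec K sz f t]: each level 1 <= k <= K of [t] is
   permuted among its first [sz k] entries, the other levels are kept. *)
Definition sym_point (R : Type) (K : nat) (sz : nat -> nat)
    (t t' : nat -> nat -> R) :=
  exists rho : nat -> nat -> nat,
    [/\ forall k, 1 <= k <= K -> exists s : 'S_(sz k), rho k =1 permfun s,
        forall k, ~~ (1 <= k <= K) -> rho k =1 id &
        forall k a, t' k a = t k (rho k a)].

Lemma symrec_eq0 (R : fieldType) (sz : nat -> nat) (f : (nat -> nat -> R) -> R)
    K t :
  (forall t', sym_point K sz t t' -> f t' = 0%R) -> symrec K sz f t = 0%R.
Proof.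
elim: K t => [|K IH] t f0 /=.
  by apply: f0; exists (fun _ => id); split=> // k; lia.
apply: big1 => s _; apply: IH => t' [rho [rho_perm rho_id t'_def]]; apply: f0.
exists (fun k => if k == K.+1 then permfun s else rho k); split=> [k kK|k kK|k a].
- by case: eqP => [->|ne]; [exists s | apply: rho_perm; lia].
- by case: eqP => [e|ne]; [lia | apply: rho_id; lia].
- by rewrite t'_def; case: eqP => // ne; rewrite rho_id //; lia.
Qed.

Section VanishingTerm.
Variables (F : fieldType) (N n : nat) (lam : 'I_N -> nat).
Hypothesis lam_n : (\sum_(k < N) lam k)%N = n.
Variables (sigma : 'S_n) (I J : 'I_n -> 'I_N).
Hypotheses (HI : is_opart lam I) (HJ : is_opart lam J).
Variable z : 'I_n -> F.
Hypothesis z_neq0 : forall i, z i != 0%R.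
Variables (h : F) (rho : nat -> nat -> nat) (t : nat -> nat -> F).
Hypothesis rho_perm :
  forall k, 1 <= k < N -> exists s : 'S_(lamc lam k), rho k =1 permfun s.
Hypothesis rho_N : rho N =1 id.
Hypothesis t_def : forall k a, t k a = tJsig J sigma z k (rho k a).

Local Notation Isig := (fun i => I (sigma i)).

Let lamc_n : lamc lam N = n. Proof. by rewrite lamc_N. Qed.

(* The variable [t k a] is [z_(zidx k a)], see [t_zidx]. *)
Definition zidx k a := if k < N then ix J k (rho k a) else permfun sigma a.

Lemma rho_lt k a : 1 <= k < N -> a < lamc lam k -> rho k a < lamc lam k.
Proof. by move=> /rho_perm[s ->]; apply: permfun_lt. Qed.

Lemma zidx_mem k a : 1 <= k < N -> a < lamc lam k -> zidx k a \in idx J k.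
Proof.
move=> kN ak; rewrite /zidx (andP kN).2; apply: mem_nth.
by rewrite (size_idx _ HJ) rho_lt.
Qed.

Lemma zidx_lt k a : 1 <= k <= N -> a < lamc lam k -> zidx k a < n.
Proof.
move=> kN ak; case: (ltnP k N) => [lt_kN | le_Nk].
  have kN' : 1 <= k < N by lia.
  by have /idx_memP[x -> _] := zidx_mem kN' ak.
have eN : k = N by lia.
by subst k; rewrite lamc_n in ak; rewrite /zidx ltnn permfun_lt.
Qed.

Lemma t_zidx k a : 1 <= k <= N -> a < lamc lam k -> t k a = zat z (zidx k a).
Proof.
move=> /andP[_ kN] ak; rewrite t_def /tJsig /zidx.
case: ltnP => // Nk; have eN : k = N by lia.
by subst k; rewrite rho_N zat_perm // -lamc_n.
Qed.

Lemma zat_neq0 x : x < n -> zat z x != 0%R.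
Proof. by move=> xn; rewrite -[x]/(val (Ordinal xn)) zat_ord. Qed.

Lemma zidx_inj k : 1 <= k < N -> {in gtn (lamc lam k) &, injective (zidx k)}.
Proof.
move=> kN a b ak bk; rewrite /zidx (andP kN).2 /ix => /eqP.
rewrite nth_uniq ?(size_idx _ HJ) ?rho_lt ?idx_uniq // => /eqP.
by have [s rho_s] := rho_perm kN; rewrite !rho_s; apply: permfun_inj.
Qed.

Lemma zidx_up k a : 1 <= k < N -> a < lamc lam k ->
  exists2 c, c < lamc lam k.+1 & zidx k.+1 c = zidx k a.
Proof.
move=> kN ak; have /idx_memP[y -> Jyk] := zidx_mem kN ak.
case: (ltnP k.+1 N) => [k1N | Nk1].
  have Jyk1 : val y \in idx J k.+1 by apply/idx_mem/ltnW.
  have [s rho_s] : exists s : 'S_(lamc lam k.+1), rho k.+1 =1 permfun s.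
    by apply: rho_perm; lia.
  have y_pos : index (val y) (idx J k.+1) < lamc lam k.+1.
    by rewrite -(size_idx _ HJ) index_mem.
  have [c ck c_y] := permfun_surj s y_pos.
  by exists c; rewrite // /zidx k1N /ix rho_s c_y nth_index.
have eN : k.+1 = N by lia.
exists (permfun sigma^-1 y); first by rewrite eN lamc_n permfun_lt.
by rewrite /zidx eN ltnn permfunVK ?inE.
Qed.

(* Where the variable [t k a] reappears at level [k.+1] in position [c],
   the factor [1 - t k.+1 c / t k a] of U vanishes unless i^(k+1)_c <= i^(k)_a. *)
Lemma Ufun_eq0_collision k a c :
  1 <= k < N -> a < lamc lam k -> c < lamc lam k.+1 ->
  zidx k.+1 c = zidx k a -> ix Isig k a < ix Isig k.+1 c ->
  Ufun lam Isig t h = 0%R.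
Proof.
move=> kN ak ck same lt_ac; rewrite /Ufun.
apply: (prodf_eq0_mem (x := k)) => //; first by rewrite mem_index_iota.
apply: (prodf_eq0_mem (x := Ordinal ak)) => //; first exact: mem_index_enum.
apply/eqP; rewrite !mulf_eq0; apply/orP; left; apply/orP; right; apply/eqP.
apply: (prodf_eq0_mem (x := Ordinal ck)) => //; first exact: mem_index_enum.
have kN' : 1 <= k <= N by lia.
have k1N : 1 <= k.+1 <= N by lia.
by rewrite /= (t_zidx k1N) // (t_zidx kN') // same divff ?subrr ?zat_neq0 ?zidx_lt.
Qed.

Section NonzeroTerm.
Hypothesis U_neq0 : Ufun lam Isig t h != 0%R.

Lemma zidx_bound k a : 1 <= k <= N -> a < lamc lam k ->
  permfun sigma^-1 (zidx k a) <= ix Isig k a.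
Proof.
case/andP=> k1 /subnKC; move: (N - k) => d.
elim: d k k1 a => [|d IH] k k1 a eN ak.
  rewrite addn0 in eN; subst k; rewrite lamc_n in ak.
  by rewrite /zidx ltnn permfunK // /ix idx_N nth_iota.
have kN : 1 <= k < N by lia.
have [c ck same] := zidx_up kN ak.
rewrite -same; apply: leq_trans (IH k.+1 _ c _ ck) _; rewrite ?addSnnS //.
by rewrite leqNgt; apply: contra U_neq0 => /(Ufun_eq0_collision kN ak ck same)->.
Qed.

Lemma le_sigma_of_Ufun_neq0 : le_sigma lam sigma J I.
Proof.
move=> k kN i ik.
have kN' : 1 <= k <= N by lia.
have below a : a \in iota 0 i.+1 -> a < lamc lam k by rewrite mem_iota; lia.
apply: (@nth_le_of_uniq_bounded _
  [seq permfun sigma^-1 (zidx k a) | a <- iota 0 i.+1]); first exact: idx_sorted_leq.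
- rewrite map_inj_in_uniq ?iota_uniq // => a b /below ak /below bk.
  by move=> /(permfun_inj (zidx_lt kN' ak) (zidx_lt kN' bk)) /(zidx_inj kN ak bk).
- by rewrite size_map size_iota.
- move=> _ /mapP[a /below ak ->].
  have /idx_memP[x -> Jx] := zidx_mem kN ak.
  by rewrite permfun_ord; apply: idx_mem; rewrite /= permKV.
- move=> _ /mapP[a a_i ->]; apply: leq_trans (zidx_bound kN' (below a a_i)) _.
  apply: (sorted_leq_nth leq_trans leqnn); first exact: idx_sorted_leq.
  + by rewrite inE (size_idx _ (is_opart_perm sigma HI)) below.
  + by rewrite inE (size_idx _ (is_opart_perm sigma HI)).
  + by move: a_i; rewrite mem_iota; lia.
Qed.

End NonzeroTerm.
End VanishingTerm.

Local Open Scope ring_scope.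

Theorem lemma6p2 (F : fieldType) (N n : nat) (lam : 'I_N -> nat)
    (Hlam : (\sum_(k < N) lam k)%N = n)
    (sigma : 'S_n) (I J : 'I_n -> 'I_N)
    (HI : is_opart lam I) (HJ : is_opart lam J)
    (z : 'I_n -> F) (Hzinj : injective z) (Hz0 : forall i, z i != 0)
    (h : F) :
  ~ le_sigma lam sigma J I -> Wtilde_at lam sigma I J z h = 0.
Proof.
move=> not_le; rewrite /Wtilde_at /Wfun symrec_eq0 ?mulr0 ?mul0r //.
move=> t [rho [rho_perm rho_id t_def]]; apply/eqP/(contra_notT _ not_le) => U_neq0.
apply: (le_sigma_of_Ufun_neq0 Hlam HI HJ Hz0 _ _ t_def U_neq0).
- by move=> k kN; apply: rho_perm; lia.
- by apply: rho_id; apply/negP; lia.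
Qed.
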